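(* Let $\mathbb P$ be a Bernoulli measure on $\partial\mathcal M$, let $a\in\Sigma$, and let $\mathcal M'_a=\{x\in\mathcal M:|x|_a=0\}$ be the submonoid of heaps with no occurrence of $a$. Then $$\sum_{x\in\mathcal M'_a}\mathbb P({\uparrow}x)<\infty,\qquad \sum_{x\in\mathcal M'_a}|x|\,\mathbb P({\uparrow}x)<\infty,\qquad \sum_{x\in\mathcal M'_a}|x|^2\,\mathbb P({\uparrow}x)<\infty.$$
   Context: Let $\Sigma$ be a finite set with at least two elements and $I\subseteq\Sigma\times\Sigma$ a symmetric irreflexive relation such that $(\Sigma,(\Sigma\times\Sigma)\setminus I)$ is connected. The heap monoid $\mathcal M=\mathcal M(\Sigma,I)$ is $\Sigma^*$ modulo the smallest congruence containing $(ab,ba)$ for $(a,b)\in I$; $\cdot$ is concatenation, $0$ the empty heap, $|x|$ the length and $|x|_a$ the number of occurrences of $a$ in any representative word. $x\le y$ iff $y=x\cdot z$ for some $z$. Cliques are heaps formed by distinct pairwise independent pieces; $\mathfrak C$ the nonempty ones; $\gamma\to\gamma'$ iff each piece of $\gamma'$ is dependent on some piece of $\gamma$. Every nonempty heap has a unique Cartier–Foata decomposition $\gamma_1\cdots\gamma_n$ with $\gamma_i\in\mathfrak C$, $\gamma_i\to\gamma_{i+1}$. The boundary $\partial\mathcal M$ is the set of infinite sequences $(\gamma_n)_{n\ge1}$ of nonempty cliques with $\gamma_n\to\gamma_{n+1}$, ordered together with $\mathcal M$ by $\xi\le\xi'$ iff $\gamma_1\cdots\gamma_n\le\gamma'_1\cdots\gamma'_n$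 for all $n$ (finite heaps padded with empty cliques). ${\uparrow}x=\{\xi\in\partial\mathcal M:x\le\xi\}$; $\mathcal F$ the generated $\sigma$-algebra. A Bernoulli measure is a probability $\mathbb P$ on $(\partial\mathcal M,\mathcal F)$ with $\mathbb P({\uparrow}(x\cdot y))=\mathbb P({\uparrow}x)\mathbb P({\uparrow}y)$ and $\mathbb P({\uparrow}x)>0$ for all $x,y$. *)

From Stdlib Require Import Reals.
From mathcomp Require Import all_boot.

(** * Heap monoid M(T, I): words over T modulo the congruence generated by
      ab = ba for (a,b) in I.  A heap is represented by any of its words. *)
Inductive heq {T : Type} (I : rel T) : seq T -> seq T -> Prop :=
| heq_refl u : heq I u u
| heq_sym u v : heq I u v -> heq I v u
| heq_trans u v w : heq I u v -> heq I v w -> heq I u w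
| heq_swap u v (a b : T) : I a b -> heq I (u ++ a :: b :: v) (u ++ b :: a :: v).

Definition hle {T : Type} (I : rel T) (x y : seq T) : Prop :=
  exists z, heq I y (x ++ z).

Definition is_clique {T : finType} (I : rel T) (g : {set T}) : Prop :=
  forall a b, a \in g -> b \in g -> a != b -> I a b.

Definition arrow {T : finType} (I : rel T) (g g' : {set T}) : Prop :=
  forall b, b \in g' -> exists2 a, a \in g & ~~ I a b.

Definition cliques_word {T : finType} (cs : seq {set T}) : seq T :=
  flatten (map (fun g : {set T} => enum g) cs).

Definition is_CF {T : finType} (I : rel T) (x : seq T) (cs : seq {set T}) : Prop :=
  (forall g, g \in cs -> is_clique I g /\ g != set0) /\
  (forall i, i.+1 < size cs -> arrow I (nth set0 cs i) (nth set0 cs i.+1)) /\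
  heq I x (cliques_word cs).

(** boundary elements: infinite sequences of nonempty cliques (indexed from 0)
    with xi n -> xi (n+1) *)
Definition is_boundary {T : finType} (I : rel T) (xi : nat -> {set T}) : Prop :=
  forall n, is_clique I (xi n) /\ xi n != set0 /\ arrow I (xi n) (xi n.+1).

Definition Bnd {T : finType} (I : rel T) := {xi : nat -> {set T} | is_boundary I xi}.

(** x <= xi : gamma_1(x)...gamma_n(x) <= xi_1 ... xi_n for all n,
    x padded with empty cliques *)
Definition le_bd {T : finType} (I : rel T) (x : seq T) (xi : nat -> {set T}) : Prop :=
  forall cs, is_CF I x cs -> forall n,
    hle I (cliques_word (map (fun i => nth set0 cs i) (iota 0 n)))
          (cliques_word (map xi (iota 0 n))).

Definition upset {T : finType} (I : rel T) (x : seq T) : Bnd I -> Prop :=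
  fun xi => le_bd I x (proj1_sig xi).

Inductive measurable {T : finType} (I : rel T) : (Bnd I -> Prop) -> Prop :=
| meas_up x : measurable I (upset I x)
| meas_compl A : measurable I A -> measurable I (fun xi => ~ A xi)
| meas_union (A : nat -> Bnd I -> Prop) :
    (forall n, measurable I (A n)) -> measurable I (fun xi => exists n, A n xi)
| meas_ext A B : measurable I A -> (forall xi, A xi <-> B xi) -> measurable I B.

(** probability measure on (Bnd, F) (values outside F are irrelevant) *)
Definition probability {T : finType} (I : rel T) (P : (Bnd I -> Prop) -> R) : Prop :=
  (forall A B, (forall xi, A xi <-> B xi) -> P A = P B) /\
  (forall A, measurable I A -> Rle R0 (P A)) /\
  P (fun _ => True) = R1 /\
  (forall A : nat -> Bnd I -> Prop,
     (forall n, measurable I (A n)) ->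
     (forall m n xi, m <> n -> A m xi -> A n xi -> False) ->
     infinite_sum (fun n => P (A n)) (P (fun xi => exists n, A n xi))).

Definition bernoulli {T : finType} (I : rel T) (P : (Bnd I -> Prop) -> R) : Prop :=
  probability I P /\
  (forall x y : seq T, P (upset I (x ++ y)) = Rmult (P (upset I x)) (P (upset I y))) /\
  (forall x : seq T, Rlt R0 (P (upset I x))).

(** sum over the heaps x satisfying S of a nonnegative f is finite:
    the sums over all finite families of pairwise distinct heaps are bounded *)
Definition heap_sum_finite {T : Type} (I : rel T) (S : seq T -> Prop)
    (f : seq T -> R) : Prop :=
  exists B : R, forall L : seq (seq T),
    (forall i j, i < j < size L -> ~ heq I (nth [::] L i) (nth [::] L j)) ->
    (forall w, List.In w L -> S w) ->
    Rle (foldr Rplus R0 (map f L)) B.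

From Stdlib Require Import Reals Lra Classical.
From mathcomp Require Import all_boot zify.
Set Implicit Arguments. Unset Strict Implicit.

(* Choose a word W0 without a along which the cone of a (the letters forced to
   precede an occurrence of a) grows to the whole alphabet; it exists because
   the dependence graph is connected.  For W = W0 a and an a-free heap x, the
   whole of x lies in the past of the first a of x W r, and the past of the
   first a and its complement are heap invariants; so x and r can be read off
   x W r.  Hence the heaps x W, x a-free, have pairwise disjoint up-sets, and
   the sum of P(up x) P(up W) is at most 1.  Inserting W at one or two cut
   points of x gives |x|+1, resp. at least |x|^2/2, pairwise incompatible heaps
   of probability P(up x) P(up W)^2, resp. P(up x) P(up W)^3, which bounds the
   two weighted sums in the same way. *)

Section HeapEquivalence.
Variables (T : finType) (I : rel T).
Hypotheses (HIsym : symmetric I) (HIirr : irreflexive I).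
Local Notation heq := (heq I).

Lemma heq_congr (f : seq T -> seq T) :
  (forall u v b c, I b c -> heq (f (u ++ b :: c :: v)) (f (u ++ c :: b :: v))) ->
  forall u v, heq u v -> heq (f u) (f v).
Proof.
move=> Hf u v; elim=> {u v} [u|u v _ H|u v w _ H1 _ H2|u v b c Hbc].
- exact: heq_refl.
- exact: heq_sym.
- exact: heq_trans H1 H2.
- exact: Hf.
Qed.

Lemma heq_perm u v : heq u v -> perm_eq u v.
Proof.
elim=> {u v} [u|u v _ H|u v w _ H1 _ H2|u v b c _].
- exact: perm_refl.
- by rewrite perm_sym.
- exact: perm_trans H1 H2.
- by rewrite perm_cat2l; apply/permP => q /=; rewrite addnCA.
Qed.

Lemma heq_size u v : heq u v -> size u = size v.
Proof. by move/heq_perm/perm_size. Qed.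

Lemma heq_catl s u v : heq u v -> heq (s ++ u) (s ++ v).
Proof.
apply: (heq_congr (f := cat s)) => u' v' b c Hbc.
by rewrite !catA; apply: heq_swap.
Qed.

Lemma heq_catr s u v : heq u v -> heq (u ++ s) (v ++ s).
Proof.
apply: (heq_congr (f := cat^~ s)) => u' v' b c Hbc.
by rewrite -!catA; apply: heq_swap.
Qed.

Lemma heq_cat u u' v v' : heq u u' -> heq v v' -> heq (u ++ v) (u' ++ v').
Proof. by move=> Hu Hv; apply: heq_trans (heq_catr _ Hu) (heq_catl _ Hv). Qed.

Lemma heq_rev u v : heq u v -> heq (rev u) (rev v).
Proof.
apply: (heq_congr (f := rev)) => u' v' b c Hbc.
rewrite !rev_cat !rev_cons -!cats1 -!catA /=.
by apply: heq_swap; rewrite HIsym.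
Qed.

Lemma rem_cat (x : T) (u v : seq T) :
  rem x (u ++ v) = if x \in u then rem x u ++ v else u ++ rem x v.
Proof.
elim: u => [//|y u IH] /=; rewrite inE IH.
by case: (eqVneq y x) => [->|_] //=; case: (x \in u).
Qed.

Lemma heq_rem x u v : heq u v -> heq (rem x u) (rem x v).
Proof.
apply: (heq_congr (f := rem x)) => u' v' b c Hbc.
have nbc : b != c by apply: contraTneq Hbc => ->; rewrite HIirr.
rewrite !rem_cat; case: (x \in u'); first exact: heq_swap.
rewrite /=; case: (eqVneq b x) => [<-|nbx]; first by rewrite eq_sym (negbTE nbc); apply: heq_refl.
by case: (eqVneq c x) => _ /=; [apply: heq_refl | apply: heq_swap].
Qed.

Lemma heq_cancell s u v : heq (s ++ u) (s ++ v) -> heq u v.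
Proof.
elim: s => [//|x s IH] /= H; apply: IH.
by have := heq_rem x H; rewrite /= eqxx.
Qed.

Lemma heq_cancelr s u v : heq (u ++ s) (v ++ s) -> heq u v.
Proof.
move/heq_rev; rewrite !rev_cat => /heq_cancell/heq_rev.
by rewrite !revK.
Qed.

Lemma heq_commute_seq c B u v : (forall b, b \in B -> I b c) ->
  heq (u ++ B ++ c :: v) (u ++ c :: B ++ v).
Proof.
elim: B u => [|b B IH] u HB /=; first exact: heq_refl.
have := IH (rcons u b) (fun y yB => HB y (@mem_behead _ (b :: B) y yB)).
rewrite -cats1 -!catA /= => H; apply: heq_trans H _.
by apply: heq_swap; apply: HB; apply: mem_head.
Qed.

Lemma heq_perm_independent s t : uniq s -> perm_eq s t ->
  (forall x y, x \in s -> y \in s -> x != y -> I x y) -> heq s t.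
Proof.
elim: s t => [|x s IH] t Us Pst Hind.
  by move/perm_size: Pst => /esym/size0nil ->; apply: heq_refl.
have xt : x \in t by rewrite -(perm_mem Pst) mem_head.
case/splitPr: xt Pst => t1 t2 Pst; case/andP: Us => xs Us.
have Ps : perm_eq s (t1 ++ t2).
  by rewrite -(perm_cons x); apply: perm_trans Pst _; rewrite -cat1s perm_catCA.
have t1s y : y \in t1 -> y \in s by move=> yt; rewrite (perm_mem Ps) mem_cat yt.
apply: heq_trans (_ : heq (x :: t1 ++ t2) _).
  apply: (heq_catl [:: x]); apply: IH => // y z ys zs.
  by apply: Hind; rewrite inE ?ys ?zs orbT.
apply: heq_sym; apply: (heq_commute_seq [::]) => y yt.
apply: Hind; [by rewrite inE t1s ?orbT | exact: mem_head |].
by apply: contraNneq xs => <-; apply: t1s.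
Qed.

End HeapEquivalence.

Section FirstOccurrenceCone.
Variables (T : finType) (I : rel T).
Hypotheses (HIsym : symmetric I) (HIirr : irreflexive I).
Variable a : T.
Local Notation heq := (heq I).

Definition dep (b : T) (C : {set T}) : bool := [exists s in C, ~~ I b s].

(* Scanning a word from right to left, a letter joins the cone [C] when it
   depends on a letter already in it; the state records the letters that
   joined, the letters that did not, and [C]. *)
Definition sift_step (b : T) (t : seq T * seq T * {set T}) :=
  let: (m, q, C) := t in if dep b C then (b :: m, q, b |: C) else (m, b :: q, C).

Definition sift (x : seq T) t := foldr sift_step t x.

Definition sift0 : seq T * seq T * {set T} := ([::], [::], [set a]).

(* For a word containing [a], [cone w] is the past of the first [a] (ending
   with that [a]) and [rest w] is the remainder of the word. *)
Definition cone (w : seq T) : seq T :=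
  if a \in w then (sift (take (index a w) w) sift0).1.1 ++ [:: a] else [::].

Definition rest (w : seq T) : seq T :=
  if a \in w then (sift (take (index a w) w) sift0).1.2 ++ drop (index a w).+1 w
  else w.

Lemma sift_cat x y t : sift (x ++ y) t = sift x (sift y t).
Proof. exact: foldr_cat. Qed.

Lemma sift_acc x m q C : sift x (m, q, C) =
  let t := sift x ([::], [::], C) in (t.1.1 ++ m, t.1.2 ++ q, t.2).
Proof.
elim: x => [//|b x IH] /=; rewrite IH.
by case: (sift x _) => [[m' q'] C'] /=; case: (dep b C').
Qed.

Lemma cone_split pre post : a \notin pre ->
  cone (pre ++ a :: post) = (sift pre sift0).1.1 ++ [:: a].
Proof.
move=> apre; rewrite /cone mem_cat mem_head orbT index_cat (negbTE apre) /=.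
by rewrite eqxx addn0 take_size_cat.
Qed.

Lemma rest_split pre post : a \notin pre ->
  rest (pre ++ a :: post) = (sift pre sift0).1.2 ++ post.
Proof.
move=> apre; rewrite /rest mem_cat mem_head orbT index_cat (negbTE apre) /=.
by rewrite eqxx addn0 take_size_cat // -cat_rcons drop_size_cat // size_rcons.
Qed.

Lemma first_occurrence w : a \in w ->
  exists pre post, w = pre ++ a :: post /\ a \notin pre.
Proof.
move=> aw; exists (take (index a w) w), (drop (index a w).+1 w); split.
  by rewrite -{1}(cat_take_drop (index a w) w) (drop_nth a) ?index_mem // nth_index.
by rewrite in_take // ltnn.
Qed.

Lemma dep_setU1 b c C : dep b (c |: C) = ~~ I b c || dep b C.
Proof.
apply/exists_inP/orP => [[s /setU1P [-> ->|sC H]]|[H|/exists_inP [s sC H]]].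
- by left.
- by right; apply/exists_inP; exists s.
- by exists c; rewrite ?setU11.
- by exists s; rewrite ?setU1r.
Qed.

Lemma dep_set1 c : I c a -> dep c [set a] = false.
Proof. by move=> Ica; apply/exists_inP => [[s /set1P ->]]; rewrite Ica. Qed.

Lemma sift_step_swap b c t : I b c ->
  [/\ heq (sift_step b (sift_step c t)).1.1 (sift_step c (sift_step b t)).1.1,
      heq (sift_step b (sift_step c t)).1.2 (sift_step c (sift_step b t)).1.2 &
      (sift_step b (sift_step c t)).2 = (sift_step c (sift_step b t)).2].
Proof.
move=> Ibc; case: t => [[m q] C].
have Hb : dep b (c |: C) = dep b C by rewrite dep_setU1 Ibc.
have Hc : dep c (b |: C) = dep c C by rewrite dep_setU1 HIsym Ibc.
rewrite /=; case db: (dep b C); case dc: (dep c C);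
  rewrite /= ?Hb ?Hc ?db ?dc /=; split => //;
  by [apply: heq_refl | apply: setUCA | apply: (@heq_swap _ I [::])].
Qed.

Lemma sift_congr u t1 t2 :
  heq t1.1.1 t2.1.1 -> heq t1.1.2 t2.1.2 -> t1.2 = t2.2 ->
  [/\ heq (sift u t1).1.1 (sift u t2).1.1, heq (sift u t1).1.2 (sift u t2).1.2 &
      (sift u t1).2 = (sift u t2).2].
Proof.
case: t1 => [[m1 q1] C1]; case: t2 => [[m2 q2] C2] /= Hm Hq <-.
by rewrite (sift_acc u m1) (sift_acc u m2); split => //; apply: heq_catl.
Qed.

Lemma cone_rest_swap_a u x v : a \notin u -> I x a ->
  cone (u ++ x :: a :: v) = cone (u ++ a :: x :: v) /\
  rest (u ++ x :: a :: v) = rest (u ++ a :: x :: v).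
Proof.
move=> au Ixa; have nxa : x != a by apply: contraTneq Ixa => ->; rewrite HIirr.
have aux : a \notin u ++ [:: x] by rewrite mem_cat (negbTE au) inE eq_sym (negbTE nxa).
rewrite -[u ++ x :: _]/(u ++ [:: x] ++ a :: v) catA.
rewrite !cone_split // !rest_split // sift_cat /= dep_set1 //=.
by rewrite sift_acc /= cats0 -catA.
Qed.

Lemma cone_rest_swap u v b c : I b c ->
  heq (cone (u ++ b :: c :: v)) (cone (u ++ c :: b :: v)) /\
  heq (rest (u ++ b :: c :: v)) (rest (u ++ c :: b :: v)).
Proof.
move=> Ibc; case au : (a \in u).
  have [pre [post [-> apre]]] := first_occurrence au.
  rewrite -!catA /= !cone_split // !rest_split //; split; first exact: heq_refl.
  by rewrite !catA; apply: heq_swap.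
case: (eqVneq b a) => [Eba|nba].
  rewrite Eba in Ibc *; have Ica : I c a by rewrite HIsym.
  have [-> ->] := cone_rest_swap_a v (negbT au) Ica.
  by split; apply: heq_refl.
case: (eqVneq c a) => [Eca|nca].
  rewrite Eca in Ibc *; have [-> ->] := cone_rest_swap_a v (negbT au) Ibc.
  by split; apply: heq_refl.
have notin_pre x y w : x != a -> y != a -> a \notin w -> a \notin u ++ x :: y :: w.
  by move=> nxa nya aw; rewrite mem_cat au !inE !(eq_sym a) (negbTE nxa) (negbTE nya).
case av : (a \in v); last first.
  rewrite /cone /rest !(negbTE (notin_pre _ _ _ _ _ _)) ?av //.
  by split; [apply: heq_refl | apply: heq_swap].
have [pre [post [-> apre]]] := first_occurrence av.
rewrite !(catA u (_ :: _ :: pre)) !cone_split ?notin_pre //.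
rewrite !rest_split ?notin_pre // !sift_cat.
have [H1 H2 H3] := sift_step_swap (sift pre sift0) Ibc.
have [K1 K2 _] := sift_congr u H1 H2 H3.
by split; apply: heq_catr.
Qed.

Lemma heq_cone u v : heq u v -> heq (cone u) (cone v).
Proof. by apply: heq_congr => u' v' b c /(cone_rest_swap u' v') []. Qed.

Lemma heq_rest u v : heq u v -> heq (rest u) (rest v).
Proof. by apply: heq_congr => u' v' b c /(cone_rest_swap u' v') []. Qed.

End FirstOccurrenceCone.

Section CoveringWord.
Variables (T : finType) (I : rel T).
Hypotheses (HIsym : symmetric I) (HIirr : irreflexive I).
Variable a : T.
Local Notation heq := (heq I).
Local Notation dep := (dep I).
Local Notation sift := (sift I).

Definition spread (x : seq T) (C : {set T}) := (sift x ([::], [::], C)).2.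

Lemma spread_cons y x C :
  spread (y :: x) C = if dep y (spread x C) then y |: spread x C else spread x C.
Proof.
rewrite /spread /=; case: (sift x _) => [[m q] C'] /=.
by case: (dep y C').
Qed.

Lemma spread_cat x y C : spread (x ++ y) C = spread x (spread y C).
Proof.
by rewrite /spread sift_cat; case: (sift y _) => [[m q] C']; rewrite sift_acc.
Qed.

Lemma subset_spread x (C : {set T}) : C \subset spread x C.
Proof.
elim: x => [|y x IH]; first exact: subxx.
rewrite spread_cons; case: (dep y _) => //.
exact: subset_trans IH (subsetU1 _ _).
Qed.

Lemma dep_subset b (C1 C2 : {set T}) : C1 \subset C2 -> dep b C1 -> dep b C2.
Proof.
by move=> /subsetP sub /exists_inP [s sC H]; apply/exists_inP; exists s; rewrite ?sub.
Qed.

Lemma mem_spread b x C : b \in x -> dep b C -> b \in spread x C.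
Proof.
elim: x => [//|y x IH]; rewrite inE spread_cons => /orP [/eqP <- | bx] Hd.
  by rewrite (dep_subset (subset_spread x C) Hd) setU11.
by case: (dep y _); rewrite ?inE IH ?orbT.
Qed.

Lemma sift_setT x m q : sift x (m, q, setT) = (x ++ m, q, setT).
Proof.
elim: x => [//|b x IH]; rewrite /= IH /=.
have -> : dep b setT by apply/exists_inP; exists b; rewrite ?inE ?HIirr.
by rewrite setUT.
Qed.

Variable W0 : seq T.
Hypotheses (aW0 : a \notin W0) (HW0 : spread W0 [set a] = setT).

(* Once the cone of [a] has spread over the whole alphabet, every letter of an
   [a]-free prefix lies in the past of the first [a]. *)
Lemma cone_covering x r : a \notin x ->
  cone I a (x ++ W0 ++ a :: r) = x ++ (sift W0 (sift0 a)).1.1 ++ [:: a].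
Proof.
move=> ax; rewrite catA cone_split ?mem_cat ?negb_or ?ax // sift_cat.
move: HW0; rewrite /spread /sift0; case: (sift W0 _) => [[m q] C] /= ->.
by rewrite sift_setT catA.
Qed.

Lemma rest_covering x r : a \notin x ->
  rest I a (x ++ W0 ++ a :: r) = (sift W0 (sift0 a)).1.2 ++ r.
Proof.
move=> ax; rewrite catA rest_split ?mem_cat ?negb_or ?ax // sift_cat.
move: HW0; rewrite /spread /sift0; case: (sift W0 _) => [[m q] C] /= ->.
by rewrite sift_setT.
Qed.

Lemma heq_cancel_covering x y r r' : a \notin x -> a \notin y ->
  heq (x ++ W0 ++ a :: r) (y ++ W0 ++ a :: r') -> heq x y /\ heq r r'.
Proof.
move=> ax ay H; split.
  by have := heq_cone HIsym HIirr a H; rewrite !cone_covering // => /heq_cancelr; apply.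
by have := heq_rest HIsym HIirr a H; rewrite !rest_covering // => /heq_cancell; apply.
Qed.

End CoveringWord.

Section CoveringWordExists.
Variables (T : finType) (I : rel T).
Hypothesis HIsym : symmetric I.
Hypothesis Hconn : forall x y : T, connect [rel u v | ~~ I u v] x y.
Variable a : T.

Lemma exists_dep_outside (C : {set T}) : a \in C -> C != setT ->
  exists2 b, b \notin C & dep I b C.
Proof.
move=> aC nCT.
have [y yC] : exists y, y \notin C.
  apply/existsP; apply: contraNT nCT => /existsPn H.
  by apply/eqP/setP => y; rewrite inE; apply/negPn/H.
case: (boolP [exists b, (b \notin C) && dep I b C]) => [/existsP [b /andP [? ?]]|H].
  by exists b.
exfalso; move/negP: yC; apply.
case/connectP: (Hconn a y) => p; elim: p a aC => [|z p IH] x xC /=; first by move=> _ ->.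
case/andP => xz pp ly; apply: IH pp ly; apply: contraNT H => zC; apply/existsP.
by exists z; rewrite zC /=; apply/exists_inP; exists x; rewrite // HIsym.
Qed.

Definition letters_but_a := [seq t <- enum T | t != a].

Lemma spread_rounds k : let C := spread I (flatten (nseq k letters_but_a)) [set a] in
  C = setT \/ k < #|C|.
Proof.
elim: k => [|k IH] /=; first by right; rewrite /spread cards1.
rewrite spread_cat; set C := spread I _ [set a] in IH *.
have sub := subset_spread I letters_but_a C.
case: (eqVneq C setT) => [CT|nCT].
  by left; apply/eqP; rewrite eqEsubset subsetT -CT.
have aC : a \in C by apply: (subsetP (subset_spread I _ _)); rewrite set11.
have [b bC db] := exists_dep_outside aC nCT.
have bL : b \in letters_but_a.
  by rewrite mem_filter mem_enum andbT; apply: contraNneq bC => ->.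
right; case: IH => [CT | ltkC]; first by rewrite CT eqxx in nCT.
apply: leq_ltn_trans ltkC (proper_card _).
by rewrite properE sub; apply/subsetPn; exists b => //; apply: mem_spread.
Qed.

Lemma exists_covering_word : exists W0, a \notin W0 /\ spread I W0 [set a] = setT.
Proof.
exists (flatten (nseq #|T| letters_but_a)); split.
  by apply/flattenP => [[s /nseqP [-> _]]]; rewrite mem_filter eqxx.
by case: (spread_rounds #|T|) => //; rewrite ltnNge max_card.
Qed.

End CoveringWordExists.

Section CartierFoata.
Variables (T : finType) (I : rel T).
Hypotheses (HIsym : symmetric I) (HIirr : irreflexive I).
Local Notation heq := (heq I).

Definition indep (c : T) (g : {set T}) := [forall b in g, I c b].
Definition arrowb (g g' : {set T}) := [forall b in g', [exists x in g, ~~ I x b]].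
Definition cliqueb (g : {set T}) := [forall x in g, forall y in g, (x != y) ==> I x y].
Definition CFb (cs : seq {set T}) :=
  all (fun g => cliqueb g && (g != set0)) cs && sorted arrowb cs.

Lemma arrowP g g' : reflect (arrow I g g') (arrowb g g').
Proof.
apply: (iffP forall_inP) => H b bg.
  by have /exists_inP [x xg Hx] := H b bg; exists x.
by have [x xg Hx] := H b bg; apply/exists_inP; exists x.
Qed.

Lemma cliqueP g : reflect (is_clique I g) (cliqueb g).
Proof.
apply: (iffP forall_inP) => H.
  by move=> x y xg yg nxy; have /forall_inP/(_ y yg)/implyP := H x xg; apply.
by move=> x xg; apply/forall_inP => y yg; apply/implyP; apply: H.
Qed.

Lemma CFb_CF x cs : CFb cs -> heq x (cliques_word cs) -> is_CF I x cs.
Proof.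
case/andP => /allP Hall /(sortedP set0) Hs Hx; split; last split => //.
  by move=> g /Hall /andP [/cliqueP H1 H2].
by move=> i /Hs /arrowP.
Qed.

Lemma cliques_word_cat (A B : seq {set T}) :
  cliques_word (A ++ B) = cliques_word A ++ cliques_word B.
Proof. by rewrite /cliques_word map_cat flatten_cat. Qed.

Lemma cliques_word_nseq0 k : cliques_word (nseq k set0) = [::] :> seq T.
Proof.
elim: k => [//|k IH].
by rewrite -[cliques_word _]/(enum set0 ++ cliques_word (nseq k set0)) enum_set0 IH.
Qed.

Lemma indep_mem c g b : indep c g -> b \in g -> I c b.
Proof. by move/forall_inP; apply. Qed.

Lemma arrowb_setU1l c g g' : arrowb g g' -> arrowb (c |: g) g'.
Proof.
move/forall_inP => H; apply/forall_inP => b bg; have /exists_inP [x xg Hx] := H b bg.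
by apply/exists_inP; exists x; rewrite ?setU1r.
Qed.

Lemma arrowb_setU1r c g g' : ~~ indep c g -> arrowb g g' -> arrowb g (c |: g').
Proof.
move=> /forall_inPn [b bg Icb] /forall_inP H; apply/forall_inP => d /setU1P [->|/H //].
by apply/exists_inP; exists b; rewrite // HIsym.
Qed.

Lemma cliqueb_setU1 c g : cliqueb g -> indep c g -> cliqueb (c |: g).
Proof.
move=> /cliqueP Hg Hc; apply/cliqueP => x y /setU1P [->|xg] /setU1P [->|yg] nxy.
- by rewrite eqxx in nxy.
- exact: indep_mem Hc yg.
- by rewrite HIsym; apply: indep_mem Hc xg.
- exact: Hg.
Qed.

Lemma sorted_rcons_last (e : rel {set T}) A g :
  sorted e (rcons A g) = sorted e A && ((A == [::]) || e (last set0 A) g).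
Proof. by case: A => [|h A] //=; rewrite rcons_path. Qed.

(* The cliques after [A] all commute with [c]; [c] joins the first of them, or
   forms a new last clique. *)
Lemma split_indep c cs : exists A B, [/\ cs = A ++ B, all (indep c) B &
  (A == [::]) || ~~ indep c (last set0 A)].
Proof.
elim/last_ind: cs => [|cs g [A [B [-> HB HA]]]]; first by exists [::], [::].
case: (boolP (indep c g)) => Hg.
  by exists A, (rcons B g); rewrite rcons_cat all_rcons Hg HB.
by exists (rcons (A ++ B) g), [::]; rewrite cats0 last_rcons Hg orbT.
Qed.

Lemma CFb_rcons A c : CFb A -> (A == [::]) || ~~ indep c (last set0 A) ->
  CFb (rcons A [set c]).
Proof.
case/andP => HA sA Hlast; rewrite /CFb -cats1 all_cat HA cats1 sorted_rcons_last sA /=.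
have -> : cliqueb [set c] by apply/cliqueP => x y /set1P -> /set1P ->; rewrite eqxx.
have -> : [set c] != set0 by apply/set0Pn; exists c; rewrite set11.
case/orP: Hlast => [-> //|Hl]; rewrite orbC -[[set c]]setU0 arrowb_setU1r //.
by apply/forall_inP => b; rewrite inE.
Qed.

Lemma path_arrowb_setU1l c g B : path arrowb g B -> path arrowb (c |: g) B.
Proof. by case: B => [|h B] //= /andP [/(arrowb_setU1l c) -> ->]. Qed.

Lemma CFb_insert A g B c : CFb (A ++ g :: B) -> indep c g ->
  (A == [::]) || ~~ indep c (last set0 A) -> CFb (A ++ (c |: g) :: B).
Proof.
rewrite /CFb !all_cat /= !sorted_cat_cons !sorted_rcons_last.
case/and3P => /and3P [HA /andP [Hg _] HB] /andP [sA Hlast] pB Hc HAc.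
rewrite HA HB cliqueb_setU1 // sA path_arrowb_setU1l //= !andbT.
have -> : c |: g != set0 by apply/set0Pn; exists c; rewrite setU11.
case/orP: HAc => [-> //|Hl]; case/orP: Hlast => [-> //|Hl'].
by rewrite arrowb_setU1r ?orbT.
Qed.

Lemma cliques_word_insert A g B c : cliqueb g -> indep c g -> all (indep c) B ->
  heq (cliques_word (A ++ g :: B) ++ [:: c]) (cliques_word (A ++ (c |: g) :: B)).
Proof.
move=> Hg Hc HB; rewrite !cliques_word_cat -catA; apply: heq_catl.
rewrite -[cliques_word (g :: B)]/(enum g ++ cliques_word B).
rewrite -[cliques_word (_ :: B)]/(enum (c |: g) ++ cliques_word B).
apply: heq_trans (_ : heq (enum g ++ c :: cliques_word B) _).
  rewrite -catA -{2}[cliques_word B]cats0.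
  apply: heq_commute_seq => b /flatten_mapP [h hB]; rewrite mem_enum => bh.
  by rewrite HIsym; apply: indep_mem bh; apply: (allP HB).
have cg : c \notin g by apply: contraFN (HIirr c) => /(indep_mem Hc).
have mem_cg x : (x \in enum g ++ [:: c]) = (x \in c |: g).
  by rewrite mem_cat mem_enum inE in_setU1 orbC.
rewrite -cat1s catA; apply: heq_catr; apply: heq_perm_independent.
- by rewrite cat_uniq enum_uniq /= mem_enum (negbTE cg).
- apply: uniq_perm; rewrite ?cat_uniq ?enum_uniq /= ?mem_enum ?(negbTE cg) // => x.
  by rewrite mem_cg mem_enum.
- by move=> x y; rewrite !mem_cg; have /cliqueP := cliqueb_setU1 Hg Hc; apply.
Qed.

Lemma exists_CF w : exists cs, CFb cs /\ heq w (cliques_word cs).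
Proof.
elim/last_ind: w => [|w c [cs [Hcs Hw]]]; first by exists [::]; split => //; apply: heq_refl.
have {}Hw : heq (rcons w c) (cliques_word cs ++ [:: c]) by rewrite -cats1; apply: heq_catr.
have [A [[|g B] [Ecs HB HA]]] := split_indep c cs; subst cs.
  exists (rcons A [set c]); rewrite cats0 in Hcs Hw; split; first exact: CFb_rcons.
  apply: heq_trans Hw _; rewrite -cats1 cliques_word_cat.
  by rewrite -[cliques_word [:: _]]/(enum [set c] ++ [::]) enum_set1; apply: heq_refl.
have /andP [/allP Hall _] := Hcs.
have /andP [Hg _] : cliqueb g && (g != set0) by apply: Hall; rewrite mem_cat mem_head orbT.
case/andP: HB => Hc HB.
exists (A ++ (c |: g) :: B); split; first exact: CFb_insert.
exact: heq_trans Hw (cliques_word_insert _ Hg Hc HB).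
Qed.

End CartierFoata.


Definition compat {T : Type} (I : rel T) (u v : seq T) :=
  exists z1 z2, heq I (u ++ z1) (v ++ z2).

Lemma map_nth_iota {A : Type} (x0 : A) s k :
  map (nth x0 s) (iota 0 (size s + k)) = s ++ nseq k x0.
Proof.
rewrite iotaD map_cat; congr (_ ++ _); first exact: mkseq_nth.
apply: (@eq_from_nth _ x0) => [|i]; rewrite size_map size_iota ?size_nseq // => ltik.
by rewrite (nth_map 0) ?size_iota // nth_iota // nth_nseq ltik nth_default // leq_addr.
Qed.

(* A boundary element above both [u] and [v] has a common finite prefix above
   both, read off from Cartier-Foata decompositions of [u] and [v]. *)
Lemma upset_compat (T : finType) (I : rel T) : symmetric I -> irreflexive I ->
  forall u v (xi : Bnd I), upset I u xi -> upset I v xi -> compat I u v.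
Proof.
move=> HIsym HIirr u v xi Hu Hv.
have [cu [Hcu Hhu]] := exists_CF HIsym HIirr u.
have [cv [Hcv Hhv]] := exists_CF HIsym HIirr v.
set n := size cu + size cv.
have prefix w cs : CFb I cs -> heq I w (cliques_word cs) -> size cs <= n ->
    upset I w xi -> exists z, heq I (cliques_word (map (sval xi) (iota 0 n))) (w ++ z).
  move=> Hc Hh Hs Hw; have [z] := Hw cs (CFb_CF Hc Hh) n.
  have -> : map (nth set0 cs) (iota 0 n) = cs ++ nseq (n - size cs) set0.
    by rewrite -{1}(subnKC Hs) map_nth_iota.
  rewrite cliques_word_cat cliques_word_nseq0 cats0 => Hz.
  by exists z; apply: heq_trans Hz _; apply/heq_catr/heq_sym.
have [z1 H1] := prefix u cu Hcu Hhu (leq_addr _ _) Hu.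
have [z2 H2] := prefix v cv Hcv Hhv (leq_addl _ _) Hv.
by exists z1, z2; apply: heq_trans (heq_sym _ _ _ H1) H2.
Qed.

Section FiniteSums.
Local Open Scope R_scope.

Definition sumR {A : Type} (s : seq A) (f : A -> R) := foldr Rplus 0 (map f s).

Lemma sumR_cons {A : Type} (x : A) s f : sumR (x :: s) f = f x + sumR s f.
Proof. by []. Qed.

Lemma sumR_cat {A : Type} (s1 s2 : seq A) f :
  sumR (s1 ++ s2) f = sumR s1 f + sumR s2 f.
Proof. by elim: s1 => [|x s1 IH] /=; rewrite ?sumR_cons ?IH /sumR /=; ring. Qed.

Lemma sumR_allpairs {A B : Type} (s : seq A) (t : A -> seq B) f :
  sumR [seq (x, y) | x <- s, y <- t x] f = sumR s (fun x => sumR (t x) (fun y => f (x, y))).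
Proof.
elim: s => [//|x s IH]; rewrite /= sumR_cat IH sumR_cons; congr (_ + _).
by rewrite /sumR -map_comp.
Qed.

Lemma sumR_le {A : eqType} (s : seq A) f g :
  (forall x, x \in s -> f x <= g x) -> sumR s f <= sumR s g.
Proof.
elim: s => [|x s IH] H; first exact: Rle_refl.
rewrite !sumR_cons; apply: Rplus_le_compat; first by apply: H; apply: mem_head.
by apply: IH => y ys; apply: H; rewrite inE ys orbT.
Qed.

Lemma eq_sumR {A : eqType} (s : seq A) f g :
  (forall x, x \in s -> f x = g x) -> sumR s f = sumR s g.
Proof.
elim: s => [//|x s IH] H; rewrite !sumR_cons H ?mem_head // IH // => y ys.
by apply: H; rewrite inE ys orbT.
Qed.

Lemma sumR_const {A : Type} (s : seq A) c : sumR s (fun _ => c) = INR (size s) * c.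
Proof.
elim: s => [|x s IH]; first by rewrite /sumR /=; ring.
by rewrite sumR_cons IH -[size (x :: s)]/(size s).+1 S_INR; ring.
Qed.

Lemma sumR_mulr {A : Type} (s : seq A) f c :
  sumR s (fun x => f x * c) = sumR s f * c.
Proof. by elim: s => [|x s IH]; rewrite ?sumR_cons ?IH /sumR /=; ring. Qed.

Lemma sum_f_R0_nth l n : sum_f_R0 (fun k => nth 0 l k) n = sumR (take n.+1 l) id.
Proof.
elim: n => [|n IH]; first by case: l => [|y l]; rewrite /sumR /= ?take0 /= ?Rplus_0_r.
rewrite /= IH; case: (ltnP n.+1 (size l)) => Hn.
  by rewrite (take_nth 0 Hn) -cats1 sumR_cat /sumR /=; ring.
by rewrite nth_default // !take_oversize ?(leq_trans Hn) //; ring.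
Qed.

Lemma infinite_sum_eventually s N S :
  (forall n, (N <= n)%N -> sum_f_R0 s n = S) -> infinite_sum s S.
Proof.
move=> HS eps Heps; exists N => n /leP Hn.
by rewrite HS // /Rdist Rminus_diag Rabs_R0.
Qed.

Lemma infinite_sum_const c : infinite_sum (fun _ => c) c -> c = 0.
Proof.
move=> H; case: (Req_dec c 0) => // Hc; exfalso.
have [N HN] := H _ (Rabs_pos_lt c Hc).
have := HN N.+1 (Nat.le_succ_diag_r N).
rewrite /Rdist sum_cte S_INR.
have -> : c * (INR N.+1 + 1) - c = INR N.+1 * c by ring.
rewrite Rabs_mult Rabs_right; last exact/Rle_ge/pos_INR.
have : 1 <= INR N.+1 by apply: (le_INR 1); apply/leP.
have := Rabs_pos c; nra.
Qed.

End FiniteSums.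

Section BernoulliMeasure.
Variables (T : finType) (I : rel T).
Hypotheses (HIsym : symmetric I) (HIirr : irreflexive I).
Variable P : (Bnd I -> Prop) -> R.
Hypothesis HP : bernoulli I P.
Local Open Scope R_scope.

Lemma P_ext (A B : Bnd I -> Prop) : (forall xi, A xi <-> B xi) -> P A = P B.
Proof. by case: HP => [[H _] _]; apply: H. Qed.

Lemma P_ge0 A : measurable I A -> 0 <= P A.
Proof. by case: HP => [[_ [H _]] _]; apply: H. Qed.

Lemma P_True : P (fun _ => True) = 1.
Proof. by case: HP => [[_ [_ [H _]]] _]. Qed.

Lemma P_sigma_additive (A : nat -> Bnd I -> Prop) :
  (forall n, measurable I (A n)) ->
  (forall m n xi, m <> n -> A m xi -> A n xi -> False) ->
  infinite_sum (fun n => P (A n)) (P (fun xi => exists n, A n xi)).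
Proof. by case: HP => [[_ [_ [_ H]]] _]; apply: H. Qed.

Lemma P_upset_cat x y : P (upset I (x ++ y)) = P (upset I x) * P (upset I y).
Proof. by case: HP => [_ [H _]]; apply: H. Qed.

Lemma P_upset_gt0 x : 0 < P (upset I x).
Proof. by case: HP => [_ [_ H]]; apply: H. Qed.

Lemma measurable_True : measurable I (fun _ => True).
Proof.
pose A n := if n is 0%N then upset I [::] else fun xi => ~ upset I [::] xi.
apply: (meas_ext I (fun xi => exists n, A n xi)).
  by apply: meas_union => -[|n]; [apply: meas_up | apply/meas_compl/meas_up].
by move=> xi; split => // _; case: (classic (upset I [::] xi)); [exists 0%N | exists 1%N].
Qed.

Lemma measurable_False : measurable I (fun _ => False).
Proof. by apply: (meas_ext I _ _ (meas_compl I _ measurable_True)) => xi; split. Qed.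

Lemma P_False : P (fun _ => False) = 0.
Proof.
have := @P_sigma_additive (fun _ _ => False) (fun _ => measurable_False) (fun _ _ _ _ H _ => H).
rewrite (@P_ext _ (fun _ => False)); first exact: infinite_sum_const.
by move=> xi; split => // [[]].
Qed.

Lemma P_le1 U : measurable I U -> P U <= 1.
Proof.
move=> mU; pose A n := match n with 0 => U | 1 => fun xi => ~ U xi | _ => fun _ => False end%N.
have mA n : measurable I (A n).
  by case: n => [|[|n]]; [apply: mU | apply: meas_compl | apply: measurable_False].
have dA m n xi : m <> n -> A m xi -> A n xi -> False.
  by case: m n => [|[|m]] [|[|n]] //=; tauto.
have := P_sigma_additive mA dA.
rewrite (@P_ext _ (fun _ => True)) ?P_True; last first.
  by move=> xi; split => // _; case: (classic (U xi)); [exists 0%N | exists 1%N].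
move/uniqueness_sum => /(_ (P U + P (fun xi => ~ U xi))) E.
have := P_ge0 (meas_compl I _ mU); rewrite E; first lra.
apply: (infinite_sum_eventually (N := 1%N)) => -[//|n] _.
elim: n => [//|n IH].
by rewrite -[sum_f_R0 _ n.+2]/(sum_f_R0 _ n.+1 + P (A n.+2)) IH /= P_False; ring.
Qed.

(* Pairwise incompatible heaps have disjoint up-sets. *)
Lemma sum_incompatible_le1 (B : eqType) (G : seq B) (mk : B -> seq T) : uniq G ->
  (forall g1 g2, g1 \in G -> g2 \in G -> compat I (mk g1) (mk g2) -> g1 = g2) ->
  sumR G (fun g => P (upset I (mk g))) <= 1.
Proof.
case: G => [|g0 G'] UG HG; first by rewrite /sumR /=; lra.
set G := g0 :: G' in UG HG *.
pose A n := if (n < size G)%N then upset I (mk (nth g0 G n)) else fun _ => False.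
have mA n : measurable I (A n).
  by rewrite /A; case: ifP => _; [apply: meas_up | apply: measurable_False].
have dA m n xi : m <> n -> A m xi -> A n xi -> False.
  rewrite /A; case: ifP => Hm; case: ifP => Hn // nmn Am An; apply: nmn.
  apply/eqP; rewrite -(nth_uniq g0 Hm Hn UG); apply/eqP.
  by apply: HG; rewrite ?mem_nth //; apply: upset_compat An.
set l := map (fun g => P (upset I (mk g))) G.
have PA n : P (A n) = nth 0 l n.
  rewrite /A /l; case: ifP => Hn; first by rewrite (nth_map g0).
  by rewrite nth_default ?P_False // size_map leqNgt Hn.
have HS : infinite_sum (fun n => P (A n)) (sumR l id).
  apply: (infinite_sum_eventually (N := size G)) => n Hn.
  rewrite (PartSum.sum_eq _ (fun k => nth 0 l k)) ?sum_f_R0_nth => [|k _]; last exact: PA.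
  by rewrite take_oversize // size_map (leq_trans Hn).
have -> : sumR G (fun g => P (upset I (mk g))) = sumR l id by rewrite /sumR /l map_id.
rewrite -(uniqueness_sum _ _ _ (P_sigma_additive mA dA) HS).
exact/P_le1/meas_union.
Qed.

End BernoulliMeasure.

Definition cut_pairs n := [seq (j, i) | j <- iota 0 n.+1, i <- iota 0 j.+1].

Lemma mem_cut_pairs n j i : ((j, i) \in cut_pairs n) = (i <= j <= n).
Proof.
apply/allpairsPdep/andP => [[j' [i' [+ + [-> ->]]]]|[ij jn]].
  by rewrite !mem_iota !add0n !ltnS => /= -> ->.
by exists j, i; rewrite !mem_iota !add0n !ltnS.
Qed.

Lemma cut_pairs_uniq n : uniq (cut_pairs n).
Proof.
by apply: allpairs_uniq_dep => [|j _|[j i] [j' i'] _ _ /= [-> ->]]; rewrite ?iota_uniq.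
Qed.

Lemma size_cut_pairs n : n * n <= 2 * size (cut_pairs n).
Proof.
rewrite size_allpairs_dep; elim: n => [//|n IH].
rewrite -[n.+2]addn1 iotaD map_cat sumn_cat add0n.
have -> : sumn [seq size (iota 0 j.+1) | j <- iota n.+1 1] = n.+2.
  by rewrite /= size_iota addn0.
by move: IH; nia.
Qed.

Section AFreeHeaps.
Variables (T : finType) (I : rel T).
Hypotheses (HIsym : symmetric I) (HIirr : irreflexive I).
Variable P : (Bnd I -> Prop) -> R.
Hypothesis HP : bernoulli I P.
Variables (a : T) (W0 : seq T).
Hypotheses (aW0 : a \notin W0) (HW0 : spread I W0 [set a] = setT).
Local Open Scope R_scope.
Local Notation heq := (heq I).
Local Notation p w := (P (upset I w)).

Definition W := W0 ++ [:: a].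

Definition with_W (s : seq (seq T)) := flatten [seq u ++ W | u <- s].

Lemma compat_cancel x y r r' : a \notin x -> a \notin y ->
  compat I (x ++ W ++ r) (y ++ W ++ r') -> heq x y /\ compat I r r'.
Proof.
move=> ax ay [z1 [z2]]; rewrite /W -!catA /=.
by case/(heq_cancel_covering HIsym HIirr aW0 HW0 ax ay) => Hxy Hr; split => //; exists z1, z2.
Qed.

Lemma compat_with_W s t : a \notin flatten s -> a \notin flatten t -> size s = size t ->
  compat I (with_W s) (with_W t) -> forall i, heq (nth [::] s i) (nth [::] t i).
Proof.
elim: s t => [|u s IH] [|v t] //= as_ at_ Est; first by move=> _ i; apply: heq_refl.
rewrite -[with_W (u :: s)]/((u ++ W) ++ with_W s) -catA.
rewrite -[with_W (v :: t)]/((v ++ W) ++ with_W t) -catA.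
move: as_ at_; rewrite !mem_cat !negb_or => /andP [au as_] /andP [av at_].
case: Est => Est; case/compat_cancel => // Huv /(IH t as_ at_ Est) Hst [|i] //=.
Qed.

Lemma P_with_W s : p (with_W s) = p (flatten s) * p W ^ size s.
Proof.
elim: s => [|u s IH] /=; first by rewrite Rmult_1_r.
rewrite -[with_W (u :: s)]/((u ++ W) ++ with_W s) (P_upset_cat HP (u ++ W)) !(P_upset_cat HP u) IH; ring.
Qed.

Lemma heq_flatten s t : size s = size t ->
  (forall i, heq (nth [::] s i) (nth [::] t i)) -> heq (flatten s) (flatten t).
Proof.
elim: s t => [|u s IH] [|v t] //= Est H; first exact: heq_refl.
by case: Est => Est; apply: heq_cat (H 0%N) (IH t Est (fun i => H i.+1)).
Qed.

Lemma le_Rinv_of_mulr S c : 0 < c -> S * c <= 1 -> S <= / c.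
Proof.
by move=> Hc H; apply: (Rmult_le_reg_r c) => //; rewrite Rinv_l; lra.
Qed.

Variable L : seq (seq T).
Hypothesis HL : forall i j, (i < j < size L)%N -> ~ heq (nth [::] L i) (nth [::] L j).
Hypothesis HLa : forall w, w \in L -> a \notin w.

Lemma heq_in_family x y : x \in L -> y \in L -> heq x y -> x = y.
Proof.
move=> xL yL H; rewrite -(nth_index [::] xL) -(nth_index [::] yL).
have ix : (index x L < size L)%N by rewrite index_mem.
have iy : (index y L < size L)%N by rewrite index_mem.
case: (ltngtP (index x L) (index y L)) => [lt|lt|-> //]; exfalso.
- by apply: (HL (i := index x L) (j := index y L)); rewrite ?lt ?iy ?nth_index.
- apply: (HL (i := index y L) (j := index x L)); rewrite ?lt ?ix ?nth_index //.
  exact: heq_sym.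
Qed.

Lemma uniq_family : uniq L.
Proof.
apply/(uniqP [::]) => i j Hi Hj E; case: (ltngtP i j) => // lt; exfalso.
- by apply: (HL (i := i) (j := j)); rewrite ?lt ?Hj //= E; apply: heq_refl.
- by apply: (HL (i := j) (j := i)); rewrite ?lt ?Hi //= E; apply: heq_refl.
Qed.

(* Inserting [k] copies of [W] at distinct cuts of distinct [a]-free heaps
   yields pairwise incompatible heaps. *)
Lemma sum_cuts_le (B : eqType) (k : nat) (cuts : seq T -> seq B)
    (pieces : seq T -> B -> seq (seq T)) :
  (forall x, uniq (cuts x)) ->
  (forall x c, c \in cuts x -> flatten (pieces x c) = x /\ size (pieces x c) = k) ->
  (forall x c d, c \in cuts x -> d \in cuts x ->
     map size (pieces x c) = map size (pieces x d) -> c = d) ->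
  sumR L (fun x => INR (size (cuts x)) * p x) <= / p W ^ k.
Proof.
move=> Ucuts Hpieces Hsizes.
have HG : sumR [seq (x, c) | x <- L, c <- cuts x] (fun g => p (with_W (pieces g.1 g.2))) <= 1.
  apply: (sum_incompatible_le1 HIsym HIirr HP).
    apply: allpairs_uniq_dep => [|x _|]; rewrite ?uniq_family ?Ucuts //.
    by move=> [x c] [y d] _ _ /= [-> ->].
  move=> _ _ /allpairsPdep [x [c [xL cx ->]]] /allpairsPdep [y [d [yL dy ->]]] /= Hxy.
  have [fx sx] := Hpieces x c cx; have [fy sy] := Hpieces y d dy.
  have ax : a \notin flatten (pieces x c) by rewrite fx HLa.
  have ay : a \notin flatten (pieces y d) by rewrite fy HLa.
  have Hi := compat_with_W ax ay (etrans sx (esym sy)) Hxy.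
  have Exy : x = y.
    by apply: heq_in_family; rewrite // -fx -fy; apply: heq_flatten Hi; rewrite sx sy.
  subst y; congr (_, _); apply: (Hsizes x) => //.
  apply: (@eq_from_nth _ 0%N) => [|i]; rewrite !size_map ?sx ?sy // => ltik.
  by rewrite !(nth_map [::]) ?sx ?sy //; apply: heq_size.
apply: le_Rinv_of_mulr; first exact/pow_lt/P_upset_gt0.
rewrite -sumR_mulr; apply: Rle_trans (Req_le _ _ _) HG; rewrite sumR_allpairs.
apply: eq_sumR => x _; rewrite Rmult_assoc -sumR_const; apply: eq_sumR => c cx /=.
by have [fx sx] := Hpieces x c cx; rewrite P_with_W fx sx.
Qed.


Lemma sum_family_le : sumR L (fun x => p x) <= / p W.
Proof.
have := @sum_cuts_le _ 1 (fun _ => [:: tt]) (fun x _ => [:: x]).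
rewrite pow_1 (eq_sumR (g := fun x => p x)) => [|x _]; last by rewrite Rmult_1_l.
by apply=> // [x c _ | x [] []]; rewrite //= cats0.
Qed.

Lemma sum_size_family_le : sumR L (fun x => INR (size x) * p x) <= / p W ^ 2.
Proof.
apply: Rle_trans (@sum_cuts_le _ 2 (fun x => iota 0 (size x).+1)
  (fun x i => [:: take i x; drop i x]) _ _ _).
- apply: sumR_le => x _; rewrite size_iota.
  by apply: Rmult_le_compat_r; [apply/Rlt_le/P_upset_gt0 | apply/le_INR/leP].
- by move=> x; apply: iota_uniq.
- by move=> x i _; rewrite /= cats0 cat_take_drop.
- move=> x i j; rewrite !mem_iota !add0n !ltnS /= => ix jx [Eij _].
  by rewrite !size_takel in Eij.
Qed.

Lemma sum_size2_family_le :
  sumR L (fun x => INR (size x) * INR (size x) * p x) <= 2 * / p W ^ 3.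
Proof.
set S := sumR L (fun x => INR (size (cut_pairs (size x))) * p x).
have HS : S <= / p W ^ 3.
  apply: (@sum_cuts_le _ 3 (fun x => cut_pairs (size x))
    (fun x ji => [:: take ji.2 x; drop ji.2 (take ji.1 x); drop ji.1 x])).
  - by move=> x; apply: cut_pairs_uniq.
  - move=> x [j i]; rewrite mem_cut_pairs => /andP [ij _]; split => //=.
    by rewrite cats0 catA -(take_takel x ij) !cat_take_drop.
  - move=> x [j i] [j' i']; rewrite !mem_cut_pairs => /andP [ij jx] /andP [ij' jx'] /= [Ei _ Ej].
    rewrite !size_takel ?(leq_trans ij) ?(leq_trans ij') // !size_drop in Ei Ej.
    by congr (_, _); lia.
apply: Rle_trans (_ : _ <= S * 2) _; last lra.
rewrite /S -sumR_mulr; apply: sumR_le => x _.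
have Hsize := le_INR _ _ (leP (size_cut_pairs (@size T x))).
rewrite !mult_INR in Hsize; have Hp := Rlt_le _ _ (P_upset_gt0 HP x).
apply: Rle_trans (Rmult_le_compat_r _ _ _ Hp Hsize) _; apply: Req_le; rewrite [INR 2]/=; ring.
Qed.

End AFreeHeaps.

Lemma mem_In {A : eqType} (w : A) L : w \in L -> List.In w L.
Proof. by elim: L => [//|x L IH]; rewrite inE => /orP [/eqP ->|/IH]; [left | right]. Qed.

Unset Implicit Arguments. Set Strict Implicit.

Theorem lemma5 (T : finType) (I : rel T)
  (HIsym : symmetric I) (HIirr : irreflexive I) (HT : 1 < #|T|)
  (Hconn : forall x y : T, connect [rel u v | ~~ I u v] x y)
  (P : (Bnd I -> Prop) -> R) (HP : bernoulli I P) (a : T) :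
  heap_sum_finite I (fun w => count_mem a w = 0) (fun w => P (upset I w)) /\
  heap_sum_finite I (fun w => count_mem a w = 0)
    (fun w => Rmult (INR (size w)) (P (upset I w))) /\
  heap_sum_finite I (fun w => count_mem a w = 0)
    (fun w => Rmult (Rmult (INR (size w)) (INR (size w))) (P (upset I w))).
Proof.
have [W0 [aW0 HW0]] := exists_covering_word HIsym Hconn a.
have a_free (L : seq (seq T)) : (forall w, List.In w L -> count_mem a w = 0) ->
    forall w, w \in L -> a \notin w.
  by move=> HL w /mem_In /HL Hw; rewrite -has_pred1 has_count Hw.
split; [|split]; eexists => L HL /a_free HLa.
- exact: (sum_family_le HIsym HIirr HP aW0 HW0 HL HLa).
- exact: (sum_size_family_le HIsym HIirr HP aW0 HW0 HL HLa).
- exact: (sum_size2_family_le HIsym HIirr HP aW0 HW0 HL HLa).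
Qed.
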